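(* Let $X$ be a real Hilbert space and let $U,V,W$ be closed linear subspaces of $X$, with $Z := U\cap V\cap W$. Define the linear operator $M\colon X\times X\to X\times X\times X$ by \[ M(x,y) = \Big(P_Ux,\; P_VP_Ux+P_Vy,\; P_WP_Ux + P_WP_VP_Ux-P_Wx +P_WP_Vy-P_Wy\Big), \] and, writing $Q_i\colon X^3\to X$ for the projection onto the $i$-th coordinate, define the Ryu operator $T\colon X^2\to X^2$ by \[ T(z) = z + \big((Q_3-Q_1)Mz,\,(Q_3-Q_2)Mz\big). \] Let $0<\lambda<1$ and $(x_0,y_0)\in X\times X$, and generate $(x_k,y_k)_{k\in\mathbb N}$ via $(x_{k+1},y_{k+1}) = (1-\lambda)(x_k,y_k)+\lambda T(x_k,y_k)$. Then \[ M(x_k,y_k)\to \big(P_Z(x_0),P_Z(x_0),P_Z(x_0)\big) \] (in norm); in particular $P_U(x_k)\to P_Z(x_0)$.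
   Context: $P_S$ denotes the orthogonal projection onto a closed linear subspace $S$. The operator $M$ is the specialization of Ryu's splitting map $(x,y)\mapsto (J_A x, J_B(J_Ax+y), J_C(J_Ax - x + J_B(J_Ax+y)-y))$ to $A=N_U$, $B=N_V$, $C=N_W$ (normal cone operators), whose resolvents are $P_U,P_V,P_W$. *)

From HB Require Import structures.
From mathcomp Require Import all_boot all_order all_algebra.
From mathcomp Require Import all_classical all_reals all_analysis.
Set Implicit Arguments. Unset Strict Implicit. Unset Printing Implicit Defensive.
Import Order.TTheory GRing.Theory Num.Theory.
Import numFieldNormedType.Exports.
Local Open Scope classical_set_scope.
Local Open Scope ring_scope.

Definition inner_product (R : realType) (X : normedModType R)
  (ip : X -> X -> R) : Prop :=
  [/\ (forall x y, ip x y = ip y x),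
      (forall a x y z, ip (a *: x + y) z = a * ip x z + ip y z) &
      (forall x, `|x| ^+ 2 = ip x x)].

Definition closed_subspace (R : realType) (X : normedModType R) (S : set X) :=
  [/\ closed S, S 0 & forall a x y, S x -> S y -> S (a *: x + y)].

Definition orth_proj (R : realType) (X : normedModType R)
  (ip : X -> X -> R) (S : set X) (P : X -> X) :=
  forall x, S (P x) /\ forall s, S s -> ip (x - P x) s = 0.

(* The operator M of Ryu's splitting specialised to normal cones *)
Definition ryuM (R : realType) (X : normedModType R) (PU PV PW : X -> X)
  (z : X * X) : X * X * X :=
  let x := z.1 in let y := z.2 in
  (PU x, PV (PU x) + PV y,
   PW (PU x) + PW (PV (PU x)) - PW x + PW (PV y) - PW y).

Definition ryuT (R : realType) (X : normedModType R) (PU PV PW : X -> X)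
  (z : X * X) : X * X :=
  let m := ryuM PU PV PW z in
  (z.1 + (m.2 - m.1.1), z.2 + (m.2 - m.1.2)).

Fixpoint ryu_seq (R : realType) (X : normedModType R) (PU PV PW : X -> X)
  (l : R) (z0 : X * X) (k : nat) : X * X :=
  match k with
  | 0 => z0
  | k'.+1 => let z := ryu_seq PU PV PW l z0 k' in
             let t := ryuT PU PV PW z in
             ((1 - l) *: z.1 + l *: t.1, (1 - l) *: z.2 + l *: t.2)
  end.

From HB Require Import structures.
From mathcomp Require Import all_boot all_order all_algebra.
From mathcomp Require Import all_classical all_reals all_analysis.
From mathcomp Require Import ring lra.
Import Order.TTheory GRing.Theory Num.Theory.
Import numFieldNormedType.Exports.
Set Implicit Arguments. Unset Strict Implicit.
Local Open Scope classical_set_scope.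
Local Open Scope ring_scope.

(* The relaxed step S = (1 - lam) I + lam T is linear on X * X, and Ryu's
   identity |z|^2 - |T z|^2 = |P_U x - P_V (P_U x + y)|^2 shows
   (1 - lam) |z - S z|^2 <= lam (|z|^2 - |S z|^2), so S is nonexpansive and
   S^k z - S^(k+1) z -> 0.  The deviation M (S^k z) - (P_Z x, P_Z x, P_Z x) is
   a uniformly bounded family of linear maps of z = (x, y).  It vanishes on the
   fixed points (q, 0) with q in Z and on the fixed points with P_U x = 0,
   P_V y = 0, P_W (x + y) = 0, and tends to 0 on the range of I - S.  These
   three sets span a subspace with trivial orthogonal complement, hence dense
   in X * X, so the deviation tends to 0 everywhere. *)

Section InnerProduct.
Variables (R : realType) (X : normedModType R) (ip : X -> X -> R).
Hypothesis hip : inner_product ip.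

Lemma ipC x y : ip x y = ip y x.
Proof. by case: hip. Qed.

Lemma ipDl x y z : ip (x + y) z = ip x z + ip y z.
Proof. by case: hip => _ ipL _; have := ipL 1 x y z; rewrite scale1r mul1r. Qed.

Lemma ip0l z : ip 0 z = 0.
Proof. by apply: (addrI (ip 0 z)); rewrite -ipDl !addr0. Qed.

Lemma ipZl a x z : ip (a *: x) z = a * ip x z.
Proof. by case: hip => _ ipL _; rewrite -[a *: x]addr0 ipL ip0l addr0. Qed.

Lemma ipNl x z : ip (- x) z = - ip x z.
Proof. by rewrite -scaleN1r ipZl mulN1r. Qed.

Lemma ipBl x y z : ip (x - y) z = ip x z - ip y z.
Proof. by rewrite ipDl ipNl. Qed.

Lemma ipDr x y z : ip z (x + y) = ip z x + ip z y.
Proof. by rewrite ipC ipDl ![ip _ z]ipC. Qed.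

Lemma ip0r z : ip z 0 = 0.
Proof. by rewrite ipC ip0l. Qed.

Lemma ipZr a x z : ip z (a *: x) = a * ip z x.
Proof. by rewrite ipC ipZl ipC. Qed.

Lemma ipNr x z : ip z (- x) = - ip z x.
Proof. by rewrite ipC ipNl ipC. Qed.

Lemma ipBr x y z : ip z (x - y) = ip z x - ip z y.
Proof. by rewrite ipDr ipNr. Qed.

Definition ipE := (ipDl, ipDr, ipBl, ipBr, ipNl, ipNr, ipZl, ipZr, ip0l, ip0r).

Lemma ipxx x : ip x x = `|x| ^+ 2.
Proof. by case: hip. Qed.

Lemma ipxx_ge0 x : 0 <= ip x x.
Proof. by rewrite ipxx sqr_ge0. Qed.

Lemma ipxx_eq0 x : ip x x = 0 -> x = 0.
Proof. by rewrite ipxx => /eqP; rewrite sqrf_eq0 normr_eq0 => /eqP. Qed.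

(* Identities between vectors are proved below by testing them against every
   [t], which turns them into identities of reals that [ring] can check. *)
Lemma ip_ext u v : (forall t, ip u t = ip v t) -> u = v.
Proof.
move=> uv; apply/eqP; rewrite -subr_eq0; apply/eqP; apply: ipxx_eq0.
by rewrite ipBl !uv subrr.
Qed.

End InnerProduct.

Section ClosedSubspace.
Variables (R : realType) (X : normedModType R) (S : set X).
Hypothesis hS : closed_subspace S.

Lemma subspace0 : S 0.
Proof. by case: hS. Qed.

Lemma subspaceL a x y : S x -> S y -> S (a *: x + y).
Proof. by case: hS => _ _; apply. Qed.

Lemma subspaceB x y : S x -> S y -> S (x - y).
Proof. by move=> Sx Sy; rewrite -scaleN1r addrC; apply: subspaceL. Qed.

End ClosedSubspace.

Lemma closed_subspaceI (R : realType) (X : normedModType R) (S1 S2 : set X) :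
  closed_subspace S1 -> closed_subspace S2 -> closed_subspace (S1 `&` S2).
Proof.
move=> [cS1 S1_0 S1L] [cS2 S2_0 S2L]; split=> [|//|a x y [? ?] [? ?]].
- exact: closedI.
- by split; [apply: S1L | apply: S2L].
Qed.

Section OrthogonalProjection.
Variables (R : realType) (X : normedModType R) (ip : X -> X -> R).
Variables (S : set X) (P : X -> X).
Hypotheses (hip : inner_product ip) (hS : closed_subspace S).
Hypothesis hP : orth_proj ip S P.

Lemma proj_mem x : S (P x).
Proof. by case: (hP x). Qed.

Lemma proj_orth x s : S s -> ip (x - P x) s = 0.
Proof. by case: (hP x) => _; apply. Qed.

Lemma proj_unique x s : S s -> (forall t, S t -> ip (x - s) t = 0) -> P x = s.
Proof.
move=> Ss xs_orth; apply/eqP; rewrite -subr_eq0; apply/eqP; apply: (ipxx_eq0 hip).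
have Sd : S (P x - s) by apply: subspaceB => //; apply: proj_mem.
have -> : ip (P x - s) (P x - s) = ip (x - s) (P x - s) - ip (x - P x) (P x - s).
  by rewrite -(ipBl hip); congr ip; rewrite opprB [RHS]addrC addrA subrK.
by rewrite xs_orth // proj_orth // subrr.
Qed.

Lemma proj_id s : S s -> P s = s.
Proof. by move=> Ss; apply: proj_unique => // t _; rewrite subrr ip0l. Qed.

Lemma projL a x y : P (a *: x + y) = a *: P x + P y.
Proof.
apply: proj_unique => [|t St]; first by apply: subspaceL => //; apply: proj_mem.
have -> : a *: x + y - (a *: P x + P y) = a *: (x - P x) + (y - P y).
  by rewrite scalerBr opprD addrACA.
by rewrite (ipDl hip) (ipZl hip) !proj_orth // mulr0 addr0.
Qed.

Lemma proj0 : P 0 = 0.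
Proof. exact/proj_id/(subspace0 hS). Qed.

Lemma projD x y : P (x + y) = P x + P y.
Proof. by rewrite -[x]scale1r projL !scale1r. Qed.

Lemma projZ a x : P (a *: x) = a *: P x.
Proof. by rewrite -[a *: x]addr0 projL proj0 addr0. Qed.

Lemma projN x : P (- x) = - P x.
Proof. by rewrite -scaleN1r projZ scaleN1r. Qed.

Lemma projB x y : P (x - y) = P x - P y.
Proof. by rewrite projD projN. Qed.

Definition projE := (projD, projB, projN, projZ, proj0).

Lemma proj_norm x : `|P x| <= `|x|.
Proof.
have pyth : ip x x = ip (P x) (P x) + ip (x - P x) (x - P x).
  have := proj_orth x (proj_mem x); have := ipC hip (P x) x.
  rewrite !(ipE hip); lra.
rewrite -ler_sqr ?nnegrE // -!(ipxx hip) pyth lerDl; exact: ipxx_ge0.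
Qed.

End OrthogonalProjection.

Lemma proj_proj_sub (R : realType) (X : normedModType R) (ip : X -> X -> R)
    (S1 S2 : set X) (P1 P2 : X -> X) :
  inner_product ip -> closed_subspace S1 -> orth_proj ip S1 P1 ->
  closed_subspace S2 -> orth_proj ip S2 P2 ->
  S2 `<=` S1 -> forall x, P2 (P1 x) = P2 x.
Proof.
move=> hip hS1 hP1 hS2 hP2 S21 x.
apply: (proj_unique hip hS2 hP2); first exact: proj_mem hP2 _.
move=> t S2t; have := proj_orth hP1 x (S21 _ S2t); have := proj_orth hP2 x S2t.
rewrite !(ipE hip); lra.
Qed.

Section ProdNorm.
Variables (R : realDomainType) (U V : normedZmodType R).

Lemma ler_normr_fst (z : U * V) : `|z.1| <= `|z|.
Proof. by rewrite prod_normE le_max lexx. Qed.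

Lemma ler_normr_snd (z : U * V) : `|z.2| <= `|z|.
Proof. by rewrite prod_normE le_max lexx orbT. Qed.

Lemma normr_pair_le (z : U * V) c : `|z.1| <= c -> `|z.2| <= c -> `|z| <= c.
Proof. by move=> z1 z2; rewrite prod_normE ge_max z1 z2. Qed.

End ProdNorm.

Lemma cvg_pairP (T : Type) (F : set_system T) {FF : Filter F}
    (U V : topologicalType) (f : T -> U * V) (z : U * V) :
  f @ F --> z <-> (fun t => (f t).1) @ F --> z.1 /\ (fun t => (f t).2) @ F --> z.2.
Proof.
split=> [fz | [f1 f2]].
  by split; apply: cvg_comp fz _; [exact: cvg_fst | exact: cvg_snd].
have -> : f = (fun t => ((f t).1, (f t).2)) by apply: funext => t; case: (f t).
by case: z f1 f2 => a b /= f1 f2; exact: cvg_pair.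
Qed.

Lemma linear_le_quadratic_eq0 (R : realFieldType) (g Q : R) :
  (forall t, 2 * t * g <= t ^+ 2 * Q) -> g = 0.
Proof.
move=> lin_le_quad; set s := (`|Q| + 1)^-1.
(* Test the inequality at t = g s, where s |Q| < 1. *)
have s_gt0 : 0 < s by rewrite invr_gt0 ltr_wpDl.
have sQ : s * `|Q| < 1.
  have : s * (`|Q| + 1) = 1 by rewrite mulVf // gt_eqF // ltr_wpDl.
  by rewrite mulrDr mulr1; lra.
have g2s_ge0 : 0 <= g ^+ 2 * s by rewrite mulr_ge0 ?sqr_ge0 ?ltW.
have quad_le_abs : (g * s) ^+ 2 * Q <= (g * s) ^+ 2 * `|Q|.
  by rewrite ler_wpM2l ?sqr_ge0 ?ler_norm.
have quad_absE : (g * s) ^+ 2 * `|Q| = g ^+ 2 * s * (s * `|Q|) by ring.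
have quad_abs_le : g ^+ 2 * s * (s * `|Q|) <= g ^+ 2 * s.
  by apply: ler_piMr => //; apply: ltW.
have linE : 2 * (g * s) * g = 2 * (g ^+ 2 * s) by ring.
have g2s_le0 : g ^+ 2 * s <= 0 by have := lin_le_quad (g * s); lra.
have g2_le0 : g ^+ 2 <= 0 by have := sqr_ge0 g; nra.
by apply/eqP; rewrite -sqrf_eq0 eq_le g2_le0 sqr_ge0.
Qed.

Lemma cvgn_of_sqr_dist (R : realType) (Y : completeNormedModType R)
    (u : nat -> Y) (c : nat -> R) :
  c @ \oo --> 0 -> (forall n k, `|u n - u k| ^+ 2 <= c n + c k) -> cvgn u.
Proof.
move=> c0 u_dist; apply/cauchy_cvgP/cauchy_exP => e e0.
have e2_gt0 : 0 < e ^+ 2 / 2 by rewrite divr_gt0 ?exprn_gt0.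
move/cvgr0Pnorm_lt: c0 => /(_ _ e2_gt0) [N _ cN].
exists (u N); exists N => // n Nn /=.
rewrite -ball_normE /= -ltr_sqr ?nnegrE ?(ltW e0) //.
apply: le_lt_trans (u_dist N n) _.
have := cN N (leqnn N); have := cN n Nn; have := ler_norm (c N); have := ler_norm (c n).
lra.
Qed.

Section ProductInnerProduct.
Variables (R : realType) (X : normedModType R) (ip : X -> X -> R).
Hypothesis hip : inner_product ip.

Definition ip2 (z w : X * X) := ip z.1 w.1 + ip z.2 w.2.
Definition sqnorm2 (z : X * X) := ip2 z z.

Lemma sqnorm2E z : sqnorm2 z = `|z.1| ^+ 2 + `|z.2| ^+ 2.
Proof. by rewrite /sqnorm2 /ip2 !(ipxx hip). Qed.

Lemma sqnorm2_ge0 z : 0 <= sqnorm2 z.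
Proof. by rewrite sqnorm2E addr_ge0 ?sqr_ge0. Qed.

Lemma sqnorm2_eq0 z : sqnorm2 z = 0 -> z = 0.
Proof.
case: z => x y; rewrite /sqnorm2 /ip2 /= => xy0.
have x2 := ipxx_ge0 hip x; have y2 := ipxx_ge0 hip y.
have -> : x = 0 by apply: (ipxx_eq0 hip); lra.
by have -> : y = 0 by apply: (ipxx_eq0 hip); lra.
Qed.

Lemma ip2Bl u v t : ip2 (u - v) t = ip2 u t - ip2 v t.
Proof. by rewrite /ip2 /= !(ipE hip); ring. Qed.

Lemma ip2_ext u v : (forall t, ip2 u t = ip2 v t) -> u = v.
Proof.
move=> uv; apply/eqP; rewrite -subr_eq0; apply/eqP; apply: sqnorm2_eq0.
by rewrite /sqnorm2 ip2Bl !uv subrr.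
Qed.

Lemma sqr_normr_le_sqnorm2 z : `|z| ^+ 2 <= sqnorm2 z.
Proof.
rewrite prod_normE sqnorm2E maxEle.
by case: ifP => _; rewrite ?lerDr ?lerDl sqr_ge0.
Qed.

Lemma sqnorm2_le_sqr_normr z : sqnorm2 z <= 2 * `|z| ^+ 2.
Proof.
rewrite sqnorm2E mulr2n mulrDl mul1r.
by apply: lerD; rewrite ler_sqr ?nnegrE ?(ler_normr_fst, ler_normr_snd).
Qed.

Lemma sqnorm2Z a z : sqnorm2 (a *: z) = a ^+ 2 * sqnorm2 z.
Proof. by rewrite /sqnorm2 /ip2 /= !(ipE hip); ring. Qed.

Lemma sqnorm2_convex a x y : sqnorm2 ((1 - a) *: x + a *: y) =
  (1 - a) * sqnorm2 x + a * sqnorm2 y - a * (1 - a) * sqnorm2 (x - y).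
Proof. by rewrite /sqnorm2 /ip2 /= !(ipE hip) (ipC hip y.1) (ipC hip y.2); ring. Qed.

Lemma sqnorm2_subZ w l t :
  sqnorm2 (w - t *: l) = sqnorm2 w - 2 * t * ip2 w l + t ^+ 2 * sqnorm2 l.
Proof. by rewrite /sqnorm2 /ip2 /= !(ipE hip) (ipC hip l.1) (ipC hip l.2); ring. Qed.

Lemma sqnorm2_parallelogram w m m' :
  sqnorm2 (m - m') + 4 * sqnorm2 (w - 2^-1 *: (m + m')) =
  2 * sqnorm2 (w - m) + 2 * sqnorm2 (w - m').
Proof.
rewrite /sqnorm2 /ip2 /= !(ipE hip).
have := ipC hip w.1 m.1; have := ipC hip w.1 m'.1; have := ipC hip m.1 m'.1.
have := ipC hip w.2 m.2; have := ipC hip w.2 m'.2; have := ipC hip m.2 m'.2.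
lra.
Qed.

Lemma cvg_sqnorm2 (T : Type) (F : set_system T) {FF : Filter F}
    (f : T -> X * X) (z : X * X) :
  f @ F --> z -> sqnorm2 (f t) @[t --> F] --> sqnorm2 z.
Proof.
move=> /cvg_pairP[f1 f2]; rewrite sqnorm2E.
under eq_fun do rewrite sqnorm2E.
by apply: cvgD; rewrite expr2; under eq_fun do rewrite expr2; apply: cvgM; apply: cvg_norm.
Qed.

End ProductInnerProduct.

Section Density.
Variables (R : realType) (X : completeNormedModType R) (ip : X -> X -> R).
Hypothesis hip : inner_product ip.
Variable L : set (X * X).
Hypotheses (L0 : L 0) (L_lin : forall a m l, L m -> L l -> L (a *: m + l)).
Variable w : X * X.

Let dist2 := [set sqnorm2 ip (w - m) | m in L].
Let d := inf dist2.

Let dist2_has_inf : has_inf dist2.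
Proof.
split; first by exists (sqnorm2 ip (w - 0)), 0.
by exists 0 => _ [m _ <-]; exact: sqnorm2_ge0.
Qed.

Lemma inf_dist2_le m : L m -> d <= sqnorm2 ip (w - m).
Proof. by move=> Lm; apply: ge_inf; [case: dist2_has_inf | exists m]. Qed.

Lemma exists_minimizing_seq : exists2 f : nat -> X * X,
  forall n, L (f n) & forall n, sqnorm2 ip (w - f n) < d + harmonic n.
Proof.
have /choice[f fP] n : exists m, L m /\ sqnorm2 ip (w - m) < d + harmonic n.
  have [_ [m Lm <-] lt_inf] := inf_adherent (harmonic_gt0 n) dist2_has_inf.
  by exists m.
by exists f => n; case: (fP n).
Qed.

Section MinimizingSequence.
Variable f : nat -> X * X.
Hypothesis Lf : forall n, L (f n).
Hypothesis f_min : forall n, sqnorm2 ip (w - f n) < d + harmonic n.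

Lemma minimizing_seq_cauchy n k :
  sqnorm2 ip (f n - f k) <= 2 * harmonic n + 2 * harmonic k.
Proof.
have Lmid : L (2^-1 *: (f n + f k)).
  by rewrite scalerDr -[X in L (_ + X)]addr0; apply: L_lin => //; apply: L_lin.
have := inf_dist2_le Lmid; have := sqnorm2_parallelogram hip w (f n) (f k).
have := f_min n; have := f_min k; lra.
Qed.

Lemma minimizing_seq_cvg : exists ms : X * X, f @ \oo --> ms.
Proof.
have c0 : (fun n => 2 * harmonic n) @ \oo --> (0 : R).
  by rewrite -(mulr0 2); apply: cvgM; [exact: cvg_cst | exact: cvg_harmonic].
have f1 : cvgn (fun n => (f n).1).
  apply: cvgn_of_sqr_dist c0 _ => n k; apply: le_trans (minimizing_seq_cauchy n k).
  by rewrite sqnorm2E // lerDl sqr_ge0.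
have f2 : cvgn (fun n => (f n).2).
  apply: cvgn_of_sqr_dist c0 _ => n k; apply: le_trans (minimizing_seq_cauchy n k).
  by rewrite sqnorm2E // lerDr sqr_ge0.
exists (limn (fun n => (f n).1), limn (fun n => (f n).2)).
by apply: (proj2 (cvg_pairP f _)); split; [exact: f1 | exact: f2].
Qed.

Lemma minimizing_seq_lim_orth (ms : X * X) : f @ \oo --> ms ->
  forall l, L l -> ip2 ip (w - ms) l = 0.
Proof.
move=> f_ms l Ll.
have lim_le_d : sqnorm2 ip (w - ms) <= d.
  have d_h : (fun n => d + harmonic n) @ \oo --> d + 0.
    exact: cvgD (cvg_cst d) cvg_harmonic.
  rewrite -[d]addr0; apply: ler_cvg_to (cvg_sqnorm2 hip (cvgB (cvg_cst w) f_ms)) d_h _.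
  by near=> n; exact: ltW (f_min n).
have d_le t : d <= sqnorm2 ip (w - ms - t *: l).
  have -> : w - ms - t *: l = w - (t *: l + ms) by rewrite opprD addrA addrAC.
  apply: ler_cvg_to (cvg_cst d) (cvg_sqnorm2 hip (cvgB (cvg_cst w) (cvgD (cvg_cst (t *: l)) f_ms))) _.
  by near=> n; apply: inf_dist2_le; apply: L_lin.
apply: (linear_le_quadratic_eq0 (Q := sqnorm2 ip l)) => t.
by have := d_le t; rewrite sqnorm2_subZ //; lra.
Unshelve. all: by end_near.
Qed.

End MinimizingSequence.

Lemma orthogonal0_dense :
  (forall e, (forall l, L l -> ip2 ip e l = 0) -> e = 0) ->
  forall e, 0 < e -> exists2 m, L m & `|w - m| < e.
Proof.
move=> L_perp0 e e0.
have [f Lf f_min] := exists_minimizing_seq.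
have [ms f_ms] := minimizing_seq_cvg Lf f_min.
have w_ms : w = ms.
  apply/eqP; rewrite -subr_eq0; apply/eqP/L_perp0 => l Ll.
  exact: (minimizing_seq_lim_orth Lf f_min f_ms Ll).
move: f_ms; rewrite -w_ms => /cvgrPdist_lt /(_ e e0) [N _ fN].
by exists (f N); [exact: Lf | apply: fN => /=].
Qed.

End Density.

Lemma equibounded_cvg0_dense (R : realType) (V W : normedModType R)
    (D : nat -> V -> W) (L : set V) (C : R) :
  (forall k x y, D k (x - y) = D k x - D k y) ->
  (forall k x, `|D k x| <= C * `|x|) ->
  (forall x e, 0 < e -> exists2 m, L m & `|x - m| < e) ->
  (forall m, L m -> D ^~ m @ \oo --> 0) ->
  forall x, D ^~ x @ \oo --> 0.
Proof.
move=> DB D_le L_dense DL x; apply/cvgr0Pnorm_lt => e e0.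
have e2_gt0 : 0 < e / 2 by rewrite divr_gt0.
have C1_gt0 : 0 < `|C| + 1 by rewrite ltr_wpDl.
set eta := e / 2 / (`|C| + 1).
have eta_gt0 : 0 < eta by rewrite divr_gt0.
have C_eta : (`|C| + 1) * eta = e / 2.
  by rewrite /eta mulrC divfK // gt_eqF.
have [m Lm xm] := L_dense x eta eta_gt0.
have Dxm_lt k : `|D k (x - m)| < e / 2.
  have Cxm : C * `|x - m| <= `|C| * eta.
    apply: le_trans (ler_wpM2r (normr_ge0 _) (ler_norm C)) _.
    by apply: ler_wpM2l => //; apply: ltW.
  have : `|C| * eta < (`|C| + 1) * eta by rewrite ltr_pM2r // ltrDl.
  by have := D_le k (x - m); lra.
move/cvgr0Pnorm_lt: (DL m Lm) => /(_ _ e2_gt0); apply: filterS => k Dmk.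
have -> : D k x = D k (x - m) + D k m by rewrite DB subrK.
by apply: le_lt_trans (ler_normD _ _) _; have := Dxm_lt k; lra.
Qed.


Section Ryu.
Variables (R : realType) (X : completeNormedModType R) (ip : X -> X -> R).
Variables (U V W : set X) (PU PV PW PZ : X -> X) (lam : R).
Hypothesis hip : inner_product ip.
Hypotheses (hU : closed_subspace U) (hV : closed_subspace V) (hW : closed_subspace W).
Hypotheses (oU : orth_proj ip U PU) (oV : orth_proj ip V PV) (oW : orth_proj ip W PW).
Hypothesis oZ : orth_proj ip (U `&` V `&` W) PZ.
Hypotheses (lam_gt0 : 0 < lam) (lam_lt1 : lam < 1).

Let Z := U `&` V `&` W.
Let hZ : closed_subspace Z := closed_subspaceI (closed_subspaceI hU hV) hW.
Let ipE := ipE hip.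
Let PUE := projE hip hU oU.
Let PVE := projE hip hV oV.
Let PWE := projE hip hW oW.
Let PZE := projE hip hZ oZ.

Local Notation M := (ryuM PU PV PW).
Local Notation T := (ryuT PU PV PW).
Local Notation ip2 := (ip2 ip).
Local Notation sqnorm2 := (sqnorm2 ip).

Definition ryu_step (z : X * X) := (1 - lam) *: z + lam *: T z.

Definition ryu_gap (z : X * X) := ((M z).1.1 - (M z).2, (M z).1.2 - (M z).2).

Lemma ryu_seqE z0 k : ryu_seq PU PV PW lam z0 k = iter k ryu_step z0.
Proof. by elim: k => //= k ->. Qed.

Lemma ryuM_lin a z w : M (a *: z + w) = a *: M z + M w.
Proof.
case: z w => [x y] [x' y']; rewrite /ryuM /= !PUE !PVE !PWE.
by congr (_, _, _); apply: (ip_ext hip) => t; rewrite !ipE; ring.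
Qed.

Lemma ryuM2E z : (M z).1.2 = PV ((M z).1.1 + z.2).
Proof. by rewrite /ryuM /= PVE. Qed.

Lemma ryuM3E z : (M z).2 = PW ((M z).1.1 - z.1 + (M z).1.2 - z.2).
Proof.
rewrite /ryuM /= !PWE; apply: (ip_ext hip) => t; rewrite !ipE; ring.
Qed.

Lemma ryuT_E z : T z = z - ryu_gap z.
Proof. by apply: injective_projections => /=; rewrite opprB. Qed.

Lemma ryu_stepE z : ryu_step z = z - lam *: ryu_gap z.
Proof. by rewrite /ryu_step ryuT_E scalerBr addrA -scalerDl subrK scale1r. Qed.

Lemma sub_ryu_step z : z - ryu_step z = lam *: ryu_gap z.
Proof. by rewrite ryu_stepE opprB addrC subrK. Qed.

Lemma ryu_gap_lin a z w : ryu_gap (a *: z + w) = a *: ryu_gap z + ryu_gap w.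
Proof.
rewrite /ryu_gap ryuM_lin.
by apply: injective_projections => /=; apply: (ip_ext hip) => t; rewrite !ipE; ring.
Qed.

Lemma ryu_step_lin a z w : ryu_step (a *: z + w) = a *: ryu_step z + ryu_step w.
Proof.
rewrite !ryu_stepE ryu_gap_lin.
by apply: (ip2_ext hip) => t; rewrite /ip2 /= !ipE; ring.
Qed.

Lemma ryu_step0 : ryu_step 0 = 0.
Proof.
have := ryu_step_lin 1 0 0; rewrite !scale1r addr0 => /(congr1 (fun v => v - ryu_step 0)).
by rewrite subrr addrK => /esym.
Qed.

Lemma ryu_iter_lin k a z w :
  iter k ryu_step (a *: z + w) = a *: iter k ryu_step z + iter k ryu_step w.
Proof. by elim: k => //= k ->; rewrite ryu_step_lin. Qed.

Lemma ryu_iterB k z w : iter k ryu_step (z - w) = iter k ryu_step z - iter k ryu_step w.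
Proof. by rewrite addrC -scaleN1r ryu_iter_lin scaleN1r addrC. Qed.

Lemma ryuT_energy z : sqnorm2 z - sqnorm2 (T z) = `|(M z).1.1 - (M z).1.2| ^+ 2.
Proof.
have orthU : ip (z.1 - (M z).1.1) (M z).1.1 = 0 := proj_orth oU z.1 (proj_mem oU z.1).
have orthV : ip ((M z).1.1 + z.2 - (M z).1.2) (M z).1.2 = 0.
  by rewrite ryuM2E; apply: proj_orth oV _ _ (proj_mem oV _).
have orthW : ip ((M z).1.1 - z.1 + (M z).1.2 - z.2 - (M z).2) (M z).2 = 0.
  rewrite [in X in ip (_ - X)]ryuM3E [in X in ip _ X]ryuM3E.
  exact: proj_orth oW _ _ (proj_mem oW _).
rewrite ryuT_E /ryu_gap -(ipxx hip) /sqnorm2 /ip2.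
move: orthU orthV orthW; case: z => x y; case: (M (x, y)) => [[a b] c] /=.
rewrite !ipE => orthU orthV orthW.
have := ipC hip x y; have := ipC hip x a; have := ipC hip x b; have := ipC hip x c.
have := ipC hip y a; have := ipC hip y b; have := ipC hip y c.
have := ipC hip a b; have := ipC hip a c; have := ipC hip b c.
lra.
Qed.

Lemma ryu_step_energy z : sqnorm2 z - sqnorm2 (ryu_step z) =
  lam * `|(M z).1.1 - (M z).1.2| ^+ 2 + lam * (1 - lam) * sqnorm2 (ryu_gap z).
Proof.
have z_Tz : z - T z = ryu_gap z by rewrite ryuT_E opprB addrC subrK.
rewrite [ryu_step z]/ryu_step sqnorm2_convex // z_Tz -ryuT_energy; ring.
Qed.

Lemma ryu_step_sqnorm2_le z : sqnorm2 (ryu_step z) <= sqnorm2 z.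
Proof.
have lam_ge0 := ltW lam_gt0; have lam1_ge0 : 0 <= 1 - lam by rewrite subr_ge0 ltW.
by rewrite -subr_ge0 ryu_step_energy addr_ge0 // !mulr_ge0 ?sqr_ge0 ?sqnorm2_ge0.
Qed.

Lemma sqnorm2_sub_ryu_step_le z :
  (1 - lam) * sqnorm2 (z - ryu_step z) <= lam * (sqnorm2 z - sqnorm2 (ryu_step z)).
Proof.
rewrite ryu_step_energy sub_ryu_step sqnorm2Z // -subr_ge0.
set E := `|_ - _| ^+ 2; set G := sqnorm2 _.
have -> : lam * (lam * E + lam * (1 - lam) * G) - (1 - lam) * (lam ^+ 2 * G) =
    lam ^+ 2 * E by ring.
by rewrite mulr_ge0 ?sqr_ge0.
Qed.

Lemma ryu_iter_sqnorm2_nonincr z :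
  {homo (fun k => sqnorm2 (iter k ryu_step z)) : n m / (n <= m)%N >-> m <= n}.
Proof.
move=> n m /subnK <-; elim: (m - n)%N => // k IH.
by rewrite addSn iterS; apply: le_trans (ryu_step_sqnorm2_le _) IH.
Qed.

Lemma ryu_asymptotic_regular z :
  (fun k => iter k ryu_step z - ryu_step (iter k ryu_step z)) @ \oo --> (0 : X * X).
Proof.
set a := fun k => sqnorm2 (iter k ryu_step z).
have a_cvg : cvgn a.
  apply: nonincreasing_is_cvgn; first exact: ryu_iter_sqnorm2_nonincr.
  by exists 0 => _ [k _ <-]; exact: sqnorm2_ge0.
have da0 : (fun k => a k - a k.+1) @ \oo --> 0.
  by rewrite -(subrr (limn a)); apply: cvgB => //; rewrite (cvg_shiftS a).
apply/cvgr0Pnorm_lt => e e0.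
have eps_gt0 : 0 < (1 - lam) * e ^+ 2 / lam by rewrite !mulr_gt0 ?subr_gt0 ?exprn_gt0 ?invr_gt0.
move/cvgr0Pnorm_lt: da0 => /(_ _ eps_gt0); apply: filterS => k dak.
set y := iter k ryu_step z - _.
have lam_eps : lam * ((1 - lam) * e ^+ 2 / lam) = (1 - lam) * e ^+ 2.
  by rewrite mulrC divfK // gt_eqF.
have dy : lam * (a k - a k.+1) < (1 - lam) * e ^+ 2.
  by rewrite -lam_eps ltr_pM2l //; apply: le_lt_trans (ler_norm _) dak.
have ny : (1 - lam) * `|y| ^+ 2 <= (1 - lam) * sqnorm2 y.
  by apply: ler_wpM2l; [rewrite subr_ge0 ltW | exact: sqr_normr_le_sqnorm2].
have := sqnorm2_sub_ryu_step_le (iter k ryu_step z); rewrite -/y => yle.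
have : (1 - lam) * `|y| ^+ 2 < (1 - lam) * e ^+ 2 by rewrite /a /= in dy; lra.
by rewrite ltr_pM2l ?subr_gt0 // ltr_sqr ?nnegrE ?normr_ge0 ?(ltW e0).
Qed.


Let PZ_PU x : PZ (PU x) = PZ x.
Proof. exact: (proj_proj_sub hip hU oU hZ oZ (fun t Zt => Zt.1.1)). Qed.
Let PZ_PV x : PZ (PV x) = PZ x.
Proof. exact: (proj_proj_sub hip hV oV hZ oZ (fun t Zt => Zt.1.2)). Qed.
Let PZ_PW x : PZ (PW x) = PZ x.
Proof. exact: (proj_proj_sub hip hW oW hZ oZ (fun t Zt => Zt.2)). Qed.

Lemma ryuM_norm z : `|M z| <= 5 * `|z|.
Proof.
have z1 := ler_normr_fst z; have z2 := ler_normr_snd z; have z_ge0 := normr_ge0 z.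
have m1 : `|(M z).1.1| <= `|z| := le_trans (proj_norm hip oU z.1) z1.
have m2 : `|(M z).1.2| <= 2 * `|z|.
  rewrite ryuM2E; apply: le_trans (proj_norm hip oV _) _.
  by apply: le_trans (ler_normD _ _) _; lra.
have m3 : `|(M z).2| <= 5 * `|z|.
  rewrite ryuM3E; apply: le_trans (proj_norm hip oW _) _.
  have := ler_normB ((M z).1.1 - z.1 + (M z).1.2) z.2.
  have := ler_normD ((M z).1.1 - z.1) (M z).1.2.
  have := ler_normB (M z).1.1 z.1.
  lra.
by apply: normr_pair_le; [apply: normr_pair_le|]; lra.
Qed.

Lemma ryu_iter_norm k z : `|iter k ryu_step z| <= 2 * `|z|.
Proof.
have iter_le := sqr_normr_le_sqnorm2 hip (iter k ryu_step z).
have nonincr : sqnorm2 (iter k ryu_step z) <= sqnorm2 z.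
  exact: (ryu_iter_sqnorm2_nonincr z (leq0n k)).
have z_le := sqnorm2_le_sqr_normr hip z.
have sqr2E : (2 * `|z|) ^+ 2 = 4 * `|z| ^+ 2 by ring.
rewrite -ler_sqr ?nnegrE ?mulr_ge0 ?normr_ge0 // sqr2E.
by have := sqr_ge0 `|z|; lra.
Qed.

Definition ryu_dev k (z : X * X) : X * X * X :=
  M (iter k ryu_step z) - (PZ z.1, PZ z.1, PZ z.1).

Lemma ryu_dev_lin k a z w : ryu_dev k (a *: z + w) = a *: ryu_dev k z + ryu_dev k w.
Proof.
rewrite /ryu_dev ryu_iter_lin ryuM_lin.
have -> : PZ (a *: z + w).1 = a *: PZ z.1 + PZ w.1 := projL hip hZ oZ a z.1 w.1.
have -> : (a *: PZ z.1 + PZ w.1, a *: PZ z.1 + PZ w.1, a *: PZ z.1 + PZ w.1) =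
    a *: (PZ z.1, PZ z.1, PZ z.1) + (PZ w.1, PZ w.1, PZ w.1) by [].
by rewrite [in RHS]scalerBr opprD addrACA.
Qed.

Lemma ryu_devB k z w : ryu_dev k (z - w) = ryu_dev k z - ryu_dev k w.
Proof. by rewrite addrC -scaleN1r ryu_dev_lin scaleN1r addrC. Qed.

Lemma ryu_devD k z w : ryu_dev k (z + w) = ryu_dev k z + ryu_dev k w.
Proof. by have := ryu_dev_lin k 1 z w; rewrite !scale1r. Qed.

Lemma ryu_dev_norm k z : `|ryu_dev k z| <= 11 * `|z|.
Proof.
have Mz : `|M (iter k ryu_step z)| <= 5 * (2 * `|z|).
  exact: le_trans (ryuM_norm _) (ler_wpM2l (ler0n _ 5) (ryu_iter_norm k z)).
have PZz1 := le_trans (proj_norm hip oZ z.1) (ler_normr_fst z).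
have PZz : `|(PZ z.1, PZ z.1, PZ z.1)| <= `|z|.
  by apply: normr_pair_le; [apply: normr_pair_le|].
by apply: le_trans (ler_normB _ _) _; lra.
Qed.

Lemma ryu_iter_fixed k z : ryu_gap z = 0 -> iter k ryu_step z = z.
Proof. by move=> g0; elim: k => //= k ->; rewrite ryu_stepE g0 scaler0 subr0. Qed.

Lemma ryuM_Z q : Z q -> M (q, 0) = (q, q, q).
Proof.
move=> [[Uq Vq] Wq]; rewrite /ryuM /= (proj_id hip hU oU) // (proj_id hip hV oV) //.
rewrite (proj_id hip hW oW) // !PVE !PWE.
by congr (_, _, _); apply: (ip_ext hip) => t; rewrite !ipE; ring.
Qed.

Lemma ryu_dev_Z k q : Z q -> ryu_dev k (q, 0) = 0.
Proof.
move=> Zq; have g0 : ryu_gap (q, 0) = 0 by rewrite /ryu_gap ryuM_Z //= subrr.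
by rewrite /ryu_dev ryu_iter_fixed // ryuM_Z // (proj_id hip hZ oZ) // subrr.
Qed.

Definition ryu_ker :=
  [set z : X * X | [/\ PU z.1 = 0, PV z.2 = 0 & PW (z.1 + z.2) = 0]].

Lemma ryu_ker_lin a z w : ryu_ker z -> ryu_ker w -> ryu_ker (a *: z + w).
Proof.
move=> [z1 z2 z12] [w1 w2 w12].
split=> /=; rewrite ?PUE ?PVE ?z1 ?w1 ?z2 ?w2 ?scaler0 ?addr0 //.
have -> : a *: z.1 + w.1 + (a *: z.2 + w.2) = a *: (z.1 + z.2) + (w.1 + w.2).
  by rewrite scalerDr addrACA.
by rewrite (projD hip hW oW) (projZ hip hW oW) z12 w12 scaler0 addr0.
Qed.

Lemma ryuM_ker z : ryu_ker z -> M z = 0.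
Proof.
case: z => x y [/= Ux Vy Wxy]; rewrite /ryuM /= Ux Vy !PVE !PWE addr0.
have PWy : PW y = - PW x by apply/eqP; rewrite -addr_eq0 addrC -(projD hip hW oW) Wxy.
by rewrite PWy sub0r addr0 opprK addNr.
Qed.

Lemma ryu_dev_ker k z : ryu_ker z -> ryu_dev k z = 0.
Proof.
move=> Kz; have g0 : ryu_gap z = 0 by rewrite /ryu_gap ryuM_ker //= subrr.
have PZz : PZ z.1 = 0 by case: Kz => Uz _ _; rewrite -PZ_PU Uz PZE.
by rewrite /ryu_dev ryu_iter_fixed // ryuM_ker // PZz subrr.
Qed.

Lemma projZ_ryu_gap1 u : PZ (ryu_gap u).1 = 0.
Proof.
have -> : (ryu_gap u).1 = (M u).1.1 - (M u).2 by [].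
rewrite (projB hip hZ oZ) ryuM3E PZ_PW !PZE !PZ_PV -[(M u).1.1]/(PU u.1) !PZ_PU.
by apply: (ip_ext hip) => t; rewrite !ipE; ring.
Qed.

Lemma ryu_dev_range u : ryu_dev ^~ (u - ryu_step u) @ \oo --> (0 : X * X * X).
Proof.
have devE k : ryu_dev k (u - ryu_step u) =
    M (iter k ryu_step u - ryu_step (iter k ryu_step u)).
  rewrite /ryu_dev ryu_iterB -iterSr iterS.
  have -> : PZ (u - ryu_step u).1 = 0.
    by rewrite sub_ryu_step [(_ *: _).1]/= PZE projZ_ryu_gap1 scaler0.
  by rewrite [X in _ - X](_ : _ = 0) // subr0.
apply/cvgr0Pnorm_lt => e e0; have e5 : 0 < e / 5 by rewrite divr_gt0.
move/cvgr0Pnorm_lt: (ryu_asymptotic_regular u) => /(_ _ e5); apply: filterS => k yk.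
by rewrite devE; apply: le_lt_trans (ryuM_norm _) _; lra.
Qed.

Lemma ryu_ker0 : ryu_ker 0.
Proof. by split; rewrite /= ?addr0 (proj0 hip hU oU, proj0 hip hV oV, proj0 hip hW oW). Qed.

Definition ryu_span := [set l | exists u z q,
  [/\ ryu_ker z, Z q & l = u - ryu_step u + z + (q, 0)]].

Lemma ryu_span0 : ryu_span 0.
Proof.
exists 0, 0, 0; split; [exact: ryu_ker0 | exact: subspace0 hZ |].
by rewrite ryu_step0 subrr !add0r.
Qed.

Lemma ryu_span_lin a m l : ryu_span m -> ryu_span l -> ryu_span (a *: m + l).
Proof.
move=> [u [z [q [Kz Zq ->]]]] [u' [z' [q' [Kz' Zq' ->]]]].
exists (a *: u + u'), (a *: z + z'), (a *: q + q'); split.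
- exact: ryu_ker_lin.
- exact: subspaceL.
rewrite ryu_step_lin; move: (ryu_step u) (ryu_step u') => s s'.
by apply: (ip2_ext hip) => t; rewrite /ip2 /= !ipE; ring.
Qed.

Lemma ryu_span_dev l : ryu_span l -> ryu_dev ^~ l @ \oo --> (0 : X * X * X).
Proof.
move=> [u [z [q [Kz Zq ->]]]].
under eq_fun do rewrite 2!ryu_devD (ryu_dev_ker _ Kz) (ryu_dev_Z _ Zq) !addr0.
exact: ryu_dev_range.
Qed.

Lemma ryu_step_fixed_of_orth e : ip2 e (e - ryu_step e) = 0 -> ryu_step e = e.
Proof.
move=> e_orth; apply/eqP; rewrite eq_sym -subr_eq0; apply/eqP/(sqnorm2_eq0 hip).
have := sqnorm2_subZ hip e (e - ryu_step e) 1.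
have -> : e - 1 *: (e - ryu_step e) = ryu_step e by rewrite scale1r opprB addrC subrK.
rewrite e_orth => step_eq.
have := ryu_step_sqnorm2_le e; have := sqnorm2_ge0 hip (e - ryu_step e); lra.
Qed.

Lemma ryu_gap0_of_fixed e : ryu_step e = e -> ryu_gap e = 0.
Proof.
move=> fixed_e; have := sub_ryu_step e; rewrite fixed_e subrr => /esym/eqP.
by rewrite scaler_eq0 gt_eqF //= => /eqP.
Qed.

Lemma ryuM_eq_of_gap0 e : ryu_gap e = 0 -> (M e).1.1 = (M e).2 /\ (M e).1.2 = (M e).2.
Proof.
move=> g0; split; apply/eqP; rewrite -subr_eq0; apply/eqP.
- exact: (congr1 fst g0).
- exact: (congr1 snd g0).
Qed.

Lemma ryu_gap0_Z e : ryu_gap e = 0 -> Z (M e).1.1.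
Proof.
move=> /ryuM_eq_of_gap0[M13 M23].
split; [split|].
- exact: proj_mem oU e.1.
- by rewrite M13 -M23 ryuM2E; apply: proj_mem oV _.
- by rewrite M13 ryuM3E; apply: proj_mem oW _.
Qed.

Lemma ryu_gap0_ker e : ryu_gap e = 0 -> (M e).1.1 = 0 -> ryu_ker e.
Proof.
move=> /ryuM_eq_of_gap0[M13 M23] M1_0.
have M3_0 : (M e).2 = 0 by rewrite -M13.
have M2_0 : (M e).1.2 = 0 by rewrite M23.
have Ve : PV e.2 = 0 by have := M2_0; rewrite ryuM2E M1_0 add0r.
split => //; have := M3_0; rewrite ryuM3E M1_0 M2_0 sub0r addr0 -opprD (projN hip hW oW).
by move=> /eqP; rewrite oppr_eq0 => /eqP.
Qed.

Lemma ryu_span_orth0 e : (forall l, ryu_span l -> ip2 e l = 0) -> e = 0.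
Proof.
move=> e_perp.
have fixed_e : ryu_step e = e.
  apply: ryu_step_fixed_of_orth; apply: e_perp; exists e, 0, 0.
  by split; [exact: ryu_ker0 | exact: subspace0 hZ | rewrite addr0; exact/esym/addr0].
have g0 := ryu_gap0_of_fixed fixed_e.
have M1_0 : (M e).1.1 = 0.
  have : ip2 e ((M e).1.1, 0) = 0.
    apply: e_perp; exists 0, 0, (M e).1.1.
    by split; [exact: ryu_ker0 | exact: ryu_gap0_Z | rewrite ryu_step0 subrr !add0r].
  rewrite /ip2 /= (ip0r hip) addr0 => e1_orth.
  change (PU e.1 = 0); apply: (ipxx_eq0 hip).
  by have := proj_orth oU e.1 (proj_mem oU e.1); rewrite (ipBl hip) e1_orth; lra.
apply: (sqnorm2_eq0 hip); apply: e_perp; exists 0, e, 0.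
split; [exact: ryu_gap0_ker | exact: subspace0 hZ |].
by rewrite ryu_step0 subrr add0r; exact/esym/addr0.
Qed.

Lemma ryu_dev_cvg0 z : ryu_dev ^~ z @ \oo --> (0 : X * X * X).
Proof.
apply: (equibounded_cvg0_dense (L := ryu_span) (C := 11)).
- exact: ryu_devB.
- exact: ryu_dev_norm.
- move=> x e e0; apply: (orthogonal0_dense hip) => //.
  + exact: ryu_span0.
  + exact: ryu_span_lin.
  + exact: ryu_span_orth0.
- exact: ryu_span_dev.
Qed.

Lemma ryu_seq_cvg z0 : M (ryu_seq PU PV PW lam z0 k) @[k --> \oo] -->
  (PZ z0.1, PZ z0.1, PZ z0.1).
Proof.
under eq_fun do rewrite ryu_seqE -[M _](subrK (PZ z0.1, PZ z0.1, PZ z0.1)).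
apply: cvg_trans (cvgD (ryu_dev_cvg0 z0) (cvg_cst (PZ z0.1, PZ z0.1, PZ z0.1))) _.
by rewrite add0r.
Qed.

End Ryu.

Unset Implicit Arguments.
Set Strict Implicit.

Theorem mainTheorem1 (R : realType) (X : completeNormedModType R)
  (ip : X -> X -> R) (U V W : set X) (PU PV PW PZ : X -> X)
  (lam : R) (x0 y0 : X) :
  inner_product ip ->
  closed_subspace U -> closed_subspace V -> closed_subspace W ->
  orth_proj ip U PU -> orth_proj ip V PV -> orth_proj ip W PW ->
  orth_proj ip (U `&` V `&` W) PZ ->
  0 < lam -> lam < 1 ->
  let z := ryu_seq PU PV PW lam (x0, y0) in
  [/\ (fun k => (ryuM PU PV PW (z k)).1.1) @ \oo --> PZ x0,
      (fun k => (ryuM PU PV PW (z k)).1.2) @ \oo --> PZ x0 &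
      (fun k => (ryuM PU PV PW (z k)).2) @ \oo --> PZ x0].
Proof.
move=> hip hU hV hW oU oV oW oZ lam_gt0 lam_lt1 z.
have := ryu_seq_cvg hip hU hV hW oU oV oW oZ lam_gt0 lam_lt1 (z0 := (x0, y0)).
by move=> /cvg_pairP[/cvg_pairP[M1_cvg M2_cvg] M3_cvg].
Qed.
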